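(* Let $\mathcal{R}=(W,\unlhd)$ be a poset regarded as a category (with an arrow $w\to v$ iff $w\unlhd v$), and let $\mathbf{Set}^{\mathcal{R}}$ be the topos of covariant presheaves on $\mathcal{R}$. Then $\mathbf{Set}^{\mathcal{R}}$ is scattered if and only if there is no infinite strictly ascending chain $w_0\lhd w_1\lhd w_2\lhd\cdots$ in $W$ (equivalently, the Alexandroff topology on $W$ whose opens are the $\unlhd$-upward closed sets is scattered), where $\lhd$ is the strict part of $\unlhd$.
   Context: An elementary topos with subobject classifier $\Omega$ is scattered if, in its Mitchell–Bénabou internal language, $\forall p{:}\Omega.((\divideontimes p\Rightarrow p)\Rightarrow p)$ is valid, where $\divideontimes p:=\forall t{:}\Omega.(t\vee(t\Rightarrow p))$. A topological space is scattered if each nonempty subset has an isolated point. *)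

(* We formalize the Mitchell-Benabou internal language
   (fragment: propositional connectives and quantification over Omega)
   through its Kripke-Joyal semantics in Set^R. *)

(* Omega(w) = the set of sieves (cosieves) on w in R: upward closed subsets
   of the principal up-set of w.  Restriction along w <= v is intersection
   with the up-set of v; since forcing only tests membership at stages >= v,
   restriction is represented by the same predicate. *)
Definition sieve {W : Type} (le : W -> W -> Prop) (w : W) (S : W -> Prop) : Prop :=
  (forall x, S x -> le w x) /\ (forall x y, S x -> le x y -> S y).

(* Formulas of the internal language whose variables range over Omega
   (de Bruijn indices). *)
Inductive form : Type :=
| FVar : nat -> form            (* the proposition  p = true  for p : Omega *)
| FTop : form
| FBot : form
| FAnd : form -> form -> form
| FOr  : form -> form -> form
| FImp : form -> form -> form
| FAll : form -> form
| FEx  : form -> form.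

Definition scons {A : Type} (a : A) (e : nat -> A) : nat -> A :=
  fun n => match n with 0 => a | S m => e m end.

Fixpoint forces {W : Type} (le : W -> W -> Prop) (w : W)
    (env : nat -> (W -> Prop)) (phi : form) : Prop :=
  match phi with
  | FVar n => env n w
  | FTop => True
  | FBot => False
  | FAnd a b => forces le w env a /\ forces le w env b
  | FOr a b => forces le w env a \/ forces le w env b
  | FImp a b => forall v, le w v -> forces le v env a -> forces le v env b
  | FAll a => forall v, le w v -> forall S, sieve le v S ->
                forces le v (scons S env) a
  | FEx a => exists S, sieve le w S /\ forces le w (scons S env) a
  end.

Definition valid {W : Type} (le : W -> W -> Prop) (phi : form) : Prop :=
  forall w, forces le w (fun _ _ => False) phi.

(* ※p := forall t : Omega. (t \/ (t => p)), with p the variable of index 0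
   in the outer context (index 1 under the binder). *)
Definition star_body : form := FOr (FVar 0) (FImp (FVar 0) (FVar 1)).

(* forall p : Omega. ((※p => p) => p) *)
Definition scattered_formula : form :=
  FAll (FImp (FImp (FAll star_body) (FVar 0)) (FVar 0)).

Definition scattered_presheaf_topos {W : Type} (le : W -> W -> Prop) : Prop :=
  valid le scattered_formula.

Definition strict {W : Type} (le : W -> W -> Prop) (x y : W) : Prop :=
  le x y /\ x <> y.

(** Unfolding the Kripke-Joyal semantics, a stage x forces ※p exactly when p
    holds at every point strictly above x.  Validity of the scattering formula
    thus says that the strict order is upward inductive: an upward closed S
    containing every point all of whose strict successors lie in S contains
    everything.  An ascending chain refutes this with S the set of points lying
    beyond the chain; conversely, if such an S misses a point, every point
    outside S has a strict successor outside S, and dependent choice strings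
    these into an ascending chain. *)

From Stdlib Require Import Classical ClassicalEpsilon ChoiceFacts.

Lemma dependent_choice_in {A : Type} (P : A -> Prop) (R : A -> A -> Prop) (a : A) :
  P a -> (forall x, P x -> exists y, P y /\ R x y) ->
  exists f : nat -> A, forall n, R (f n) (f (S n)).
Proof.
  intros Pa step.
  set (R' := fun x y : {x | P x} => R (proj1_sig x) (proj1_sig y)).
  assert (total : forall x, exists y, R' x y).
  { intros [x Px]; destruct (step x Px) as [y [Py Rxy]].
    now exists (exist _ y Py). }
  destruct (functional_choice_imp_functional_dependent_choice choice
              R' total (exist _ a Pa)) as [f [_ Rf]].
  now exists (fun n => proj1_sig (f n)).
Qed.

Section ScatteredPoset.

Context {W : Type} {le : W -> W -> Prop}.
Hypothesis le_refl : forall x, le x x.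
Hypothesis le_trans : forall x y z, le x y -> le y z -> le x z.
Hypothesis le_antisym : forall x y, le x y -> le y x -> x = y.

Definition inductive_above (u : W) (P : W -> Prop) : Prop :=
  forall x, le u x -> (forall z, strict le x z -> P z) -> P x.

Definition ascending_chain (f : nat -> W) : Prop :=
  forall n, strict le (f n) (f (S n)).

Lemma up_set_sieve x y : le x y -> sieve le x (le y).
Proof. split; eauto. Qed.

Lemma forces_star x S e :
  forces le x (scons S e) (FAll star_body) <-> (forall z, strict le x z -> S z).
Proof.
  simpl; split.
  - intros Hstar z [Hxz Hneq].
    destruct (Hstar x (le_refl x) (le z) (up_set_sieve x z Hxz)) as [Hzx | Hup].
    + now destruct Hneq; apply le_antisym.
    + exact (Hup z Hxz (le_refl z)).
  - intros Hsucc v Hxv T _.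
    destruct (classic (T v)) as [Tv | nTv]; [now left | right].
    intros z Hvz Tz; apply Hsucc; split; [eauto |].
    intros <-; apply nTv.
    now replace v with x by (apply le_antisym; eauto).
Qed.

Lemma forces_scattered_formula w e :
  forces le w e scattered_formula <->
  (forall v, le w v -> forall S, sieve le v S ->
   forall u, le v u -> inductive_above u S -> S u).
Proof.
  simpl; split.
  - intros H v Hwv S HS u Hvu Hind.
    apply (H v Hwv S HS u Hvu); intros x Hux Hstar.
    now apply Hind, (forces_star x S e).
  - intros H v Hwv S HS u Hvu Hind.
    apply (H v Hwv S HS u Hvu); intros x Hux Hsucc.
    now apply Hind, (forces_star x S e).
Qed.

Lemma ascending_chain_not_inductive f :
  ascending_chain f ->
  exists S, sieve le (f 0) S /\ inductive_above (f 0) S /\ ~ S (f 0).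
Proof.
  intros Hf.
  exists (fun x => le (f 0) x /\ ~ exists n, le x (f n)); split; [| split].
  - split; [now intros x [] |].
    intros x y [H0x Hx] Hxy; split; [eauto |].
    intros [n Hyn]; apply Hx; exists n; eauto.
  - intros x H0x Hsucc; split; [exact H0x |].
    intros [n Hxn]; destruct (Hf n) as [Hstep Hneq].
    assert (Hx_next : strict le x (f (S n))).
    { split; [eauto |]; intros ->; apply Hneq; auto. }
    destruct (Hsucc _ Hx_next) as [_ Hbeyond].
    apply Hbeyond; exists (S n); apply le_refl.
  - intros [_ Hbeyond]; apply Hbeyond; exists 0; apply le_refl.
Qed.

Lemma no_ascending_chain_induction :
  ~ (exists f, ascending_chain f) -> forall u P, inductive_above u P -> P u.
Proof.
  intros Hno u P Hind; apply NNPP; intros nPu.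
  apply Hno, (dependent_choice_in (fun x => le u x /\ ~ P x) (strict le) u).
  - split; [apply le_refl | exact nPu].
  - intros x [Hux nPx]; apply NNPP; intros Hstuck.
    apply nPx, Hind; [exact Hux |]; intros z Hxz; apply NNPP; intros nPz.
    apply Hstuck; exists z.
    split; [split; [apply (le_trans _ _ _ Hux), Hxz | exact nPz] | exact Hxz].
Qed.

End ScatteredPoset.

Theorem theorem5p13 (W : Type) (le : W -> W -> Prop)
  (le_refl : forall x, le x x)
  (le_trans : forall x y z, le x y -> le y z -> le x z)
  (le_antisym : forall x y, le x y -> le y x -> x = y) :
  scattered_presheaf_topos le <->
  ~ (exists f : nat -> W, forall n, strict le (f n) (f (S n))).
Proof.
  pose proof (forces_scattered_formula le_refl le_trans le_antisym) as Hforces.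
  split.
  - intros Hvalid [f Hf].
    destruct (ascending_chain_not_inductive le_refl le_trans le_antisym f Hf)
      as (S & HS & Hind & nS0).
    exact (nS0 (proj1 (Hforces (f 0) _) (Hvalid (f 0))
                  (f 0) (le_refl _) S HS (f 0) (le_refl _) Hind)).
  - intros Hno w; apply Hforces.
    intros v _ S _ u _.
    exact (no_ascending_chain_induction le_refl le_trans Hno u S).
Qed.
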